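(* Let $\boldsymbol z,\boldsymbol m\in\{0,1\}^n$ and $\boldsymbol y\in\overline{\mathbb R}^n$ with $y_i\in\mathbb R$ if $m_i=1$ and $y_i\in\{+\infty,-\infty\}$ if $m_i=0$. Let $\mathcal N_{11}=\{j:z_j=m_j=1\}$, $n_{11}=|\mathcal N_{11}|$, and write $\mathcal N_{11}=\{j_1,\dots,j_{n_{11}}\}$ with $\mathrm{rank}_{j_1}(\boldsymbol y)<\dots<\mathrm{rank}_{j_{n_{11}}}(\boldsymbol y)$. For an integer $0\le L\le n_{11}$, $c\in\mathbb R$ and $\kappa>0$, let $\mathcal H_L=\{\boldsymbol\delta\in\mathbb R^n:\sum_{i\in\mathcal N_{11}}\mathbf 1(\delta_i>c)\le L\}$, $\mathcal A_L=\{j_{n_{11}-L+1},\dots,j_{n_{11}}\}$ if $L\ge1$ and $\mathcal A_0=\emptyset$, $\gamma=\max\{y_i:z_i=m_i=1\}-\min\{y_i:z_i=0,m_i=1\}+\kappa$, and $\boldsymbol\eta_L\in\mathbb R^n$ with $\eta_{L,i}=\gamma$ for $i\in\mathcal A_L$ and $\eta_{L,i}=c$ otherwise. Then $$\inf_{\boldsymbol\delta\in\mathcal H_L}t_{\mathrm R,\phi}(\boldsymbol z,\boldsymbol y-\boldsymbol z\circ\boldsymbol m\circ\boldsymbol\delta)=t_{\mathrm R,\phi}(\boldsymbol z,\boldsymbol y-\boldsymbol z\circ\boldsymbol m\circ\boldsymbol\eta_L)$$ for either the rank-sum or the Mann–Whitney-type statistic.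
   Context: $\overline{\mathbb R}=\mathbb R\cup\{\pm\infty\}$; $\circ$ is the entrywise product (with $0\cdot\delta_i=0$, so coordinates with $z_im_i=0$ are unchanged). For $1\le i,j\le n$ and $y,y'\in\overline{\mathbb R}$, $\psi_{i,j}(y,y')=\mathbf 1\{y>y'\}+\mathbf 1\{y=y'\}\mathbf 1\{i\ge j\}$; $\mathrm{rank}_i(\boldsymbol y)=\sum_{j=1}^n\psi_{i,j}(y_i,y_j)$. $\phi$ is a fixed nondecreasing real function on the nonnegative integers. Rank-sum statistic $t_{\mathrm R,\phi}(\boldsymbol z,\boldsymbol y)=\sum_iz_i\phi(\mathrm{rank}_i(\boldsymbol y))$; Mann–Whitney-type statistic $t_{\mathrm R,\phi}(\boldsymbol z,\boldsymbol y)=\sum_iz_i\phi(\sum_j(1-z_j)\psi_{i,j}(y_i,y_j))$. *)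

From mathcomp Require Import all_boot all_order all_algebra.
From mathcomp Require Import boolp classical_sets reals constructive_ereal.
Set Implicit Arguments. Unset Strict Implicit. Unset Printing Implicit Defensive.
Import Order.TTheory GRing.Theory Num.Theory.
Local Open Scope ring_scope.

Section Defs.
Variables (R : realType) (n : nat).

Definition psi (i j : 'I_n) (y y' : \bar R) : nat :=
  ((y' < y)%E : nat) + ((y == y') && (j <= i)%N : nat).

Definition rank (y : 'I_n -> \bar R) (i : 'I_n) : nat :=
  (\sum_(j < n) psi i j (y i) (y j))%N.

Definition t_rank (phi : nat -> R) (z : 'I_n -> bool) (y : 'I_n -> \bar R) : R :=
  \sum_(i < n) (z i)%:R * phi (rank y i).

Definition t_mw (phi : nat -> R) (z : 'I_n -> bool) (y : 'I_n -> \bar R) : R :=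
  \sum_(i < n) (z i)%:R * phi (\sum_(j < n) (1 - z j) * psi i j (y i) (y j))%N.

Definition shift (z m : 'I_n -> bool) (y : 'I_n -> \bar R) (d : 'I_n -> R)
  : 'I_n -> \bar R :=
  fun i => (y i - ((z i)%:R * (m i)%:R * d i)%:E)%E.

Definition N11 (z m : 'I_n -> bool) : {set 'I_n} := [set i | z i && m i].

Definition H_L (z m : 'I_n -> bool) (c : R) (L : nat) : set ('I_n -> R) :=
  [set d : 'I_n -> R | (\sum_(i in N11 z m) (((c < d i)%R : bool) : nat) <= L)%N].

Definition N11_sorted (z m : 'I_n -> bool) (y : 'I_n -> \bar R) : seq 'I_n :=
  sort (fun a b => (rank y a <= rank y b)%N) (enum (N11 z m)).

Definition A_L (z m : 'I_n -> bool) (y : 'I_n -> \bar R) (L : nat) : seq 'I_n :=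
  drop (#|N11 z m| - L) (N11_sorted z m y).

(* The max/min are taken in \bar R and converted with [fine]; since the
   relevant y_i are finite this is the real max/min (empty-set convention). *)
Definition gamma (z m : 'I_n -> bool) (y : 'I_n -> \bar R) (kappa : R) : R :=
  fine (\big[Order.max/-oo%E]_(i | z i && m i) y i)
  - fine (\big[Order.min/+oo%E]_(i | ~~ z i && m i) y i) + kappa.

Definition eta_L (z m : 'I_n -> bool) (y : 'I_n -> \bar R) (L : nat) (c kappa : R)
  : 'I_n -> R :=
  fun i => if i \in A_L z m y L then gamma z m y kappa else c.

End Defs.

From mathcomp Require Import all_boot all_order all_algebra.
From mathcomp Require Import boolp classical_sets reals constructive_ereal.
From mathcomp Require Import zify lra.
Set Implicit Arguments. Unset Strict Implicit. Unset Printing Implicit Defensive.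
Import Order.TTheory GRing.Theory Num.Theory.
Local Open Scope ring_scope.

(* Both statistics see the shifted outcomes only through the order of the pairs
   (value, index), and controls are never shifted.  The key fact is that for
   every control j at least as many treated units lie below j after the shift
   by eta_L as after the shift by any delta in H_L: compared with the constant
   shift c, delta moves at most L units of N11 further down, while eta_L moves
   the L top-ranked units of N11 below every control and leaves the others at
   c (and if one of those L units is below j already under the shift by c,
   then all of N11 is).  More treated units below each control means higher
   control ranks, hence a smaller rank sum; and for every s fewer treated units
   have more than s controls below them, which by Abel summation against the
   increments of phi gives a smaller Mann-Whitney statistic.  Since eta_L lies
   in H_L, the infimum is attained there. *)

Lemma sum_nat_boolE (I : finType) (P b : pred I) :
  (\sum_(i | P i) b i)%N = #|[set i | P i & b i]|.
Proof. by rewrite -sum1dep_card big_mkcondr; apply: eq_bigr => i _; case: (b i). Qed.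

Section CountBelow.
Variables (I : finType) (disp : Order.disp_t) (T : orderType disp) (key : I -> T).
Hypothesis key_inj : injective key.
Implicit Types (P : pred I) (i j k l : I).
Local Open Scope order_scope.

Definition nbelow (P : pred I) (i : I) : nat := #|[set l | P l & key l <= key i]|.
Definition nabove (P : pred I) (i : I) : nat := #|[set l | P l & key i <= key l]|.

Lemma nbelow_le P i k : key i <= key k -> (nbelow P i <= nbelow P k)%N.
Proof.
move=> ik; apply: subset_leq_card; apply/fintype.subsetP => l; rewrite !inE => /andP[-> li].
exact: le_trans ik.
Qed.

Lemma nbelow_lt P i k l : P l -> key i < key l -> key l <= key k ->
  (nbelow P i < nbelow P k)%N.
Proof.
move=> Pl il lk; apply: proper_card; apply/properP; split.
  apply/fintype.subsetP => j; rewrite !inE => /andP[-> ji].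
  exact: le_trans ji (le_trans (ltW il) lk).
by exists l; rewrite !inE Pl ?lk //= -ltNge.
Qed.

Lemma leq_nbelowT i k : (nbelow predT i <= nbelow predT k)%N = (key i <= key k).
Proof.
apply/idP/idP; last exact: nbelow_le.
apply: contraTT; rewrite -ltNge -ltnNge => ki.
exact: nbelow_lt ki (lexx _).
Qed.

Lemma nbelowT_inj : injective (nbelow predT).
Proof.
move=> i k eik; apply: key_inj; apply/le_anti.
by rewrite -!leq_nbelowT eik leqnn.
Qed.

Lemma nbelowT_bounds i : (0 < nbelow predT i <= #|I|)%N.
Proof.
rewrite max_card andbT card_gt0; apply/set0Pn; exists i.
by rewrite inE lexx.
Qed.

Lemma sum_nbelowT (V : nmodType) (F : nat -> V) :
  (\sum_i F (nbelow predT i) = \sum_(k <- iota 1 #|I|) F k)%R.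
Proof.
rewrite -big_enum -(big_map (nbelow predT) xpredT); apply: perm_big.
have uniq_ranks : uniq (map (nbelow predT) (enum I)).
  by rewrite (map_inj_uniq nbelowT_inj) enum_uniq.
apply: uniq_perm => //; first exact: iota_uniq.
have sub_iota : {subset map (nbelow predT) (enum I) <= iota 1 #|I|}.
  move=> _ /mapP[i _ ->]; rewrite mem_iota add1n ltnS.
  exact: nbelowT_bounds.
have size_ranks : size (map (nbelow predT) (enum I)) = size (iota 1 #|I|).
  by rewrite size_iota size_map -cardE.
by have [] := uniq_min_size uniq_ranks sub_iota (eq_leq (esym size_ranks)).
Qed.

Lemma nbelowTE P i : nbelow predT i = (nbelow P i + nbelow (predC P) i)%N.
Proof.
rewrite /nbelow -(cardsID [set l | P l]).
by congr (_ + _)%N; apply: eq_card => l; rewrite !inE andbC.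
Qed.

Lemma nbelow_nabove P j : ~~ P j -> (nbelow P j + nabove P j)%N = #|[set l | P l]|.
Proof.
move=> Pj; rewrite /nbelow /nabove -(cardsID [set l | key l <= key j] [set l | P l]).
congr (_ + _)%N; apply: eq_card => l; rewrite !inE //.
case Pl: (P l); rewrite ?andbF ?andbT // -ltNge lt_neqAle (inj_eq key_inj).
by have -> : j != l by apply: contraNneq Pj => ->.
Qed.

Lemma nbelow_max P i : (0 < nbelow P i)%N ->
  exists j, [/\ P j, key j <= key i & nbelow P j = nbelow P i].
Proof.
rewrite card_gt0 => /set0Pn[j0]; rewrite inE => Pj0.
case: (@arg_maxP _ _ _ j0 (fun l => P l && (key l <= key i)) key Pj0) => j /andP[Pj ji] jmax.
exists j; split=> //; apply: eq_card => l; rewrite !inE.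
case Pl: (P l) => //=; apply/idP/idP => [lj|li]; first exact: le_trans ji.
by apply: jmax; rewrite Pl.
Qed.

Lemma nbelow_gtE P s j0 : P j0 -> (s < nbelow P j0)%N ->
  (forall j, P j -> (s < nbelow P j)%N -> key j0 <= key j) ->
  forall i, (s < nbelow P i)%N = (key j0 <= key i).
Proof.
move=> Pj0 sj0 j0min i; apply/idP/idP => [si|j0i]; last first.
  exact: leq_trans sj0 (nbelow_le P j0i).
have [j [Pj ji eji]] := nbelow_max (leq_ltn_trans (leq0n s) si).
by apply: le_trans ji; apply: j0min; rewrite ?eji.
Qed.

End CountBelow.

Section CompareKeys.
Variables (I : finType) (disp : Order.disp_t) (T : orderType disp).
Variables (key1 key2 : I -> T) (z : pred I).
Hypotheses (key1_inj : injective key1) (key2_inj : injective key2).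
Hypothesis key_ctrl : forall j, ~~ z j -> key1 j = key2 j.
Hypothesis nbelow_treated_le :
  forall j, ~~ z j -> (nbelow key1 z j <= nbelow key2 z j)%N.
Local Open Scope order_scope.

Lemma nbelow_ctrl_eq j : ~~ z j -> nbelow key1 (predC z) j = nbelow key2 (predC z) j.
Proof.
move=> zj; apply: eq_card => l; rewrite !inE.
by case zl: (z l); rewrite //= !key_ctrl ?zl.
Qed.

Lemma nbelowT_ctrl_le j : ~~ z j -> (nbelow key1 predT j <= nbelow key2 predT j)%N.
Proof.
by move=> zj; rewrite !(nbelowTE _ z) nbelow_ctrl_eq // leq_add2r nbelow_treated_le.
Qed.

Lemma card_treated_nbelow_gt s :
  (#|[set i | z i & (s < nbelow key2 (predC z) i)%N]|
     <= #|[set i | z i & (s < nbelow key1 (predC z) i)%N]|)%N.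
Proof.
(* A treated unit has more than s controls below it iff it lies above js, the
   lowest control with more than s controls below it; js is the same for both
   keys. *)
pose J j := ~~ z j && (s < nbelow key1 (predC z) j)%N.
have [j0 Jj0 | noJ] := pickP J; last first.
  rewrite eq_card0 // => i; rewrite !inE; apply/negbTE/andP => -[_ si].
  have [j [/= zj _ eji]] := nbelow_max (leq_ltn_trans (leq0n s) si).
  by move: (noJ j); rewrite /J zj nbelow_ctrl_eq // eji si.
case: (@arg_minP _ _ _ j0 J key1 Jj0) => js /andP[zjs sjs] jsmin.
have js_min1 j : ~~ z j -> (s < nbelow key1 (predC z) j)%N -> key1 js <= key1 j.
  by move=> zj sj; apply: jsmin; rewrite /J zj.
have js_min2 j : ~~ z j -> (s < nbelow key2 (predC z) j)%N -> key2 js <= key2 j.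
  by move=> zj sj; rewrite -!key_ctrl //; apply: jsmin; rewrite /J zj nbelow_ctrl_eq.
have gt1 := nbelow_gtE (P := predC z) zjs sjs js_min1.
rewrite nbelow_ctrl_eq // in sjs.
have gt2 := nbelow_gtE (P := predC z) zjs sjs js_min2.
have card_gt (key : I -> T) : (forall i, (s < nbelow key (predC z) i)%N = (key js <= key i)) ->
    #|[set i | z i & (s < nbelow key (predC z) i)%N]| = nabove key z js.
  by move=> gtE; apply: eq_card => i; rewrite !inE gtE.
rewrite (card_gt _ gt1) (card_gt _ gt2).
have := nbelow_nabove key1_inj zjs; have := nbelow_nabove key2_inj zjs.
have := nbelow_treated_le zjs; lia.
Qed.

End CompareKeys.

Lemma sumr_telescope_ltn (V : zmodType) (f : nat -> V) N k : (k <= N)%N ->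
  \sum_(s < N) (f s.+1 - f s) *+ (s < k)%N = f k - f 0%N.
Proof.
move=> kN; rewrite -telescope_sumr // big_mkord.
rewrite (big_ord_widen N (fun s => f s.+1 - f s) kN) [RHS]big_mkcond.
by apply: eq_bigr => s _; case: (s < k)%N.
Qed.

Lemma ler_sum_card_gt (R : numDomainType) (I : finType) (P : pred I)
    (f : nat -> R) (a b : I -> nat) :
  {homo f : x y / (x <= y)%N >-> x <= y} ->
  (forall s, #|[set i | P i & (s < a i)%N]| <= #|[set i | P i & (s < b i)%N]|)%N ->
  \sum_(i | P i) f (a i) <= \sum_(i | P i) f (b i).
Proof.
move=> f_homo card_le; pose N := (\max_i (a i + b i))%N.
have layers (c : I -> nat) : (forall i, c i <= N)%N ->
    \sum_(i | P i) f (c i) = \sum_(s < N) (f s.+1 - f s) *+ #|[set i | P i & (s < c i)%N]|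
                             + \sum_(i | P i) f 0%N.
  move=> cN; under eq_bigr => i _ do rewrite -(subrK (f 0%N) (f (c i))).
  under eq_bigr => i _ do rewrite -(sumr_telescope_ltn f (cN i)).
  rewrite big_split exchange_big /=; congr (_ + _); apply: eq_bigr => s _.
  by rewrite sumrMnr (sum_nat_boolE P (fun i => s < c i)%N).
have a_le i : (a i <= N)%N by exact: leq_trans (leq_addr _ _) (leq_bigmax i).
have b_le i : (b i <= N)%N by exact: leq_trans (leq_addl _ _) (leq_bigmax i).
rewrite (layers a a_le) (layers b b_le) lerD2r; apply: ler_sum => s _.
by apply: ler_wpMn2l (card_le s); rewrite subr_ge0 f_homo.
Qed.

Section Statistics.
Variables (R : realType) (n : nat).
Implicit Types (v w : 'I_n -> \bar R) (z : 'I_n -> bool) (phi : nat -> R).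

Definition lexkey v (i : 'I_n) : (\bar R *l nat)%type := (v i, val i).

Lemma lexkey_inj v : injective (lexkey v).
Proof. by move=> i j [_ /val_inj]. Qed.

Lemma psi_lexkey v i j : psi i j (v i) (v j) = (lexkey v j <= lexkey v i)%O.
Proof.
rewrite /psi /lexkey lexi_pair /= eq_sym.
by case: ltgtP => //=; case: (_ <= _)%N.
Qed.

Lemma rank_nbelow v i : rank v i = nbelow (lexkey v) predT i.
Proof.
rewrite /rank /nbelow -sum1dep_card [RHS]big_mkcond.
by apply: eq_bigr => j _; rewrite psi_lexkey.
Qed.

Lemma sumr_indicator z (F : 'I_n -> R) : \sum_i (z i)%:R * F i = \sum_(i | z i) F i.
Proof.
by rewrite [RHS]big_mkcond; apply: eq_bigr => i _; case: (z i); rewrite ?mul1r ?mul0r.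
Qed.

Lemma t_rankE phi z v : t_rank phi z v =
  \sum_(k <- iota 1 n) phi k - \sum_(i | ~~ z i) phi (nbelow (lexkey v) predT i).
Proof.
have := sum_nbelowT (@lexkey_inj v) phi; rewrite card_ord => <-.
under [X in _ = X - _]eq_bigr do rewrite -rank_nbelow.
under [X in _ = _ - X]eq_bigr do rewrite -rank_nbelow.
by rewrite /t_rank sumr_indicator [X in _ = X - _](bigID z) /= addrK.
Qed.

Lemma t_mwE phi z v :
  t_mw phi z v = \sum_(i | z i) phi (nbelow (lexkey v) (predC z) i).
Proof.
rewrite /t_mw sumr_indicator; apply: eq_bigr => i _; congr phi.
rewrite /nbelow -sum1dep_card [RHS]big_mkcond; apply: eq_bigr => j _.
by rewrite psi_lexkey /=; case: (z j); case: (_ <= _)%O.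
Qed.

Section Compare.
Variables (phi : nat -> R) (z : 'I_n -> bool) (w w' : 'I_n -> \bar R).
Hypothesis phi_homo : {homo phi : a b / (a <= b)%N >-> a <= b}.
Hypothesis w_ctrl : forall j, ~~ z j -> w j = w' j.
Hypothesis nbelow_treated_le :
  forall j, ~~ z j -> (nbelow (lexkey w) z j <= nbelow (lexkey w') z j)%N.

Let lexkey_ctrl j : ~~ z j -> lexkey w j = lexkey w' j.
Proof. by move=> zj; rewrite /lexkey w_ctrl. Qed.

Lemma t_rank_le : t_rank phi z w' <= t_rank phi z w.
Proof.
rewrite !t_rankE lerD2l lerN2; apply: ler_sum => j zj; apply: phi_homo.
exact: nbelowT_ctrl_le lexkey_ctrl nbelow_treated_le j zj.
Qed.

Lemma t_mw_le : t_mw phi z w' <= t_mw phi z w.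
Proof.
rewrite !t_mwE; apply: ler_sum_card_gt => // s.
exact: card_treated_nbelow_gt (@lexkey_inj w) (@lexkey_inj w') lexkey_ctrl
  nbelow_treated_le s.
Qed.

End Compare.
End Statistics.

Lemma lexi_subE (R : realType) (x x' : \bar R) (r : R) (i j : nat) :
  (((x - r%:E)%E, i) <= ((x' - r%:E)%E, j) :> (\bar R *l nat))%O =
  ((x, i) <= (x', j) :> (\bar R *l nat))%O.
Proof. by rewrite !lexi_pair !leeD2rE. Qed.

Section Shift.
Variables (R : realType) (n : nat) (z m : 'I_n -> bool) (y : 'I_n -> \bar R).
Implicit Types (d : 'I_n -> R).

Lemma shiftE d i : shift z m y d i = if z i && m i then (y i - (d i)%:E)%E else y i.
Proof. by rewrite /shift; case: (z i); case: (m i); rewrite /= ?mul1r ?mul0r ?sube0. Qed.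

Lemma shift_notN11 d d' i : ~~ (z i && m i) -> shift z m y d i = shift z m y d' i.
Proof. by move=> /negbTE N11i; rewrite !shiftE N11i. Qed.

Lemma shift_ctrl d j : ~~ z j -> shift z m y d j = y j.
Proof. by move=> /negbTE zj; rewrite shiftE zj. Qed.

Definition treated_below (v : 'I_n -> \bar R) (j : 'I_n) : {set 'I_n} :=
  [set l | z l & (lexkey v l <= lexkey v j)%O].

Lemma treated_below_notN11 d d' j l : ~~ z j -> ~~ (z l && m l) ->
  (l \in treated_below (shift z m y d) j) = (l \in treated_below (shift z m y d') j).
Proof.
move=> zj N11l; rewrite !inE /lexkey (shift_notN11 d d' N11l).
by rewrite (shift_ctrl d zj) (shift_ctrl d' zj).
Qed.

End Shift.

Section ShiftEta.
Variables (R : realType) (n : nat) (z m : 'I_n -> bool) (y : 'I_n -> \bar R).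
Variables (L : nat) (c kappa : R).
Hypothesis y_fin : forall i, m i -> y i \is a fin_num.
Hypothesis y_inf : forall i, ~~ m i -> (y i == +oo)%E || (y i == -oo)%E.
Hypothesis L_le : (L <= #|N11 z m|)%N.
Hypothesis kappa_gt0 : 0 < kappa.

Local Notation A := (A_L z m y L).
Local Notation eta := (eta_L z m y L c kappa).

Lemma N11_fin i : z i && m i -> y i = (fine (y i))%:E.
Proof. by case/andP=> _ /y_fin /fineK. Qed.

Lemma A_L_N11 i : i \in A -> z i && m i.
Proof. by rewrite /A_L /N11_sorted => /mem_drop; rewrite mem_sort mem_enum inE. Qed.

Lemma card_A_L : #|[set i in A]| = L.
Proof.
have /card_uniqP uniqA : uniq A by rewrite drop_uniq // sort_uniq enum_uniq.
by rewrite cardsE uniqA size_drop size_sort -cardE subKn.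
Qed.

Lemma A_L_top a l : a \in A -> z l && m l -> l \notin A ->
  (lexkey y l <= lexkey y a)%O.
Proof.
move=> aA N11l lA; rewrite -leq_nbelowT -!rank_nbelow.
set s := N11_sorted z m y.
have sorted_s : sorted (fun a b => rank y a <= rank y b)%N s.
  by apply: sort_sorted => u v; apply: leq_total.
have tr : transitive (fun a b : 'I_n => rank y a <= rank y b)%N.
  by move=> u v w; apply: leq_trans.
move: sorted_s; rewrite (sorted_pairwise tr) -(cat_take_drop (#|N11 z m| - L) s).
rewrite pairwise_cat => /and3P[/allrelP rank_le _ _]; apply: rank_le => //.
have : l \in s by rewrite mem_sort mem_enum inE.
by rewrite -{1}(cat_take_drop (#|N11 z m| - L) s) mem_cat (negbTE lA) orbF.
Qed.

Lemma gamma_lt l j : z l && m l -> ~~ z j -> y j != -oo%E ->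
  (y l - (gamma z m y kappa)%:E < y j)%E.
Proof.
move=> N11l zj yj.
have [a N11a maxE] := eq_bigmax l (fun i => z i && m i) y N11l (fun i _ => leNye (y i)).
have yla : (y l <= y a)%E by rewrite -maxE; apply: le_bigmax_cond.
have [mj | /y_inf] := boolP (m j); last first.
  by rewrite (negbTE yj) orbF => /eqP->; rewrite N11_fin // -EFinB ltry.
have ctrlj : ~~ z j && m j by rewrite zj.
have [b ctrlb minE] := eq_bigmin j (fun i => ~~ z i && m i) y ctrlj (fun i _ => leey (y i)).
have ybj : (y b <= y j)%E by rewrite -minE; apply: bigmin_le_cond.
move: yla ybj; rewrite /gamma maxE minE (N11_fin N11l) (N11_fin N11a).
case/andP: ctrlb => _ /y_fin /fineK <-; rewrite -[y j](fineK (y_fin mj)).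
by rewrite !lee_fin /= -EFinB lte_fin; have := kappa_gt0; lra.
Qed.

Section Control.
Variable j : 'I_n.
Hypothesis j_ctrl : ~~ z j.

Local Notation below d := (treated_below z (shift z m y d) j).

Let shift_j d : shift z m y d j = y j := shift_ctrl m y d j_ctrl.

Lemma shift_eta_notA l : l \notin A -> shift z m y eta l = shift z m y (fun=> c) l.
Proof. by move=> lA; rewrite !shiftE /eta_L (negbTE lA). Qed.

Lemma below_shift_subset d :
  below d \subset [set l in N11 z m | c < d l] :|: below (fun=> c).
Proof.
apply/fintype.subsetP => l ld; rewrite inE.
have [N11l | notN11] := boolP (z l && m l); last first.
  by rewrite -(treated_below_notN11 y d (fun=> c) j_ctrl notN11) ld orbT.
move: ld; rewrite !inE N11l (andP N11l).1 /= => ld.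
case: ltrP => //= dc; move: ld; rewrite /lexkey !shift_j; apply: le_trans.
rewrite !shiftE N11l lexi_pair lexx implybT andbT.
by rewrite N11_fin // -!EFinB lee_fin lerB.
Qed.

Lemma below_ninfty d l : y j = -oo%E -> z l && m l -> l \notin below d.
Proof.
move=> yj N11l; rewrite inE negb_and /lexkey lexi_pair shift_j yj.
by rewrite shiftE N11l N11_fin // -EFinB leeNy_eq orbT.
Qed.

Lemma A_L_subset_below_eta : y j != -oo%E -> [set i in A] \subset below eta.
Proof.
move=> yj; apply/fintype.subsetP => a; rewrite !inE => aA; have N11a := A_L_N11 aA.
have lt_aj := gamma_lt N11a j_ctrl yj.
rewrite (andP N11a).1 /lexkey lexi_pair shift_j shiftE N11a /eta_L aA.
by rewrite ltW //= lt_geF.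
Qed.

Lemma N11_subset_below_eta a : y j != -oo%E -> a \in A -> a \in below (fun=> c) ->
  N11 z m \subset below eta.
Proof.
move=> yj aA; rewrite inE => /andP[_ ac]; apply/fintype.subsetP => l; rewrite inE => N11l.
have [lA | lA] := boolP (l \in A).
  by apply: (fintype.subsetP (A_L_subset_below_eta yj)); rewrite inE.
rewrite inE (andP N11l).1 /=; move: ac; rewrite /lexkey !shift_j; apply: le_trans.
rewrite shift_eta_notA // !shiftE N11l (A_L_N11 aA) lexi_subE.
exact: A_L_top.
Qed.

Lemma card_below_shift_le d : H_L z m c L d -> (#|below d| <= #|below eta|)%N.
Proof.
rewrite /H_L /= sum_nat_boolE => card_D.
have sub_eta : (forall l, z l && m l -> l \in below d -> l \in below eta) ->
    (#|below d| <= #|below eta|)%N.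
  move=> N11_sub; apply: subset_leq_card; apply/fintype.subsetP => l ld.
  have [/N11_sub->//|notN11] := boolP (z l && m l).
  by rewrite -(treated_below_notN11 y d eta j_ctrl notN11).
have [yj | yj] := eqVneq (y j) -oo%E.
  by apply: sub_eta => l N11l; rewrite (negbTE (below_ninfty d yj N11l)).
have [a /andP[aA ac] | noAc] := pickP (fun a => (a \in A) && (a \in below (fun=> c))).
  apply: sub_eta => l N11l _.
  by apply: (fintype.subsetP (N11_subset_below_eta yj aA ac)); rewrite inE.
have c_sub : below (fun=> c) \subset below eta.
  apply/fintype.subsetP => l lc; have := noAc l; rewrite lc andbT => /negbT lA.
  by move: lc; rewrite !inE /lexkey shift_eta_notA // !shift_j.
have card_Ac : #|[set i in A] :|: below (fun=> c)| = (L + #|below (fun=> c)|)%N.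
  rewrite -[X in (X + _)%N]card_A_L; apply/eqP; rewrite (leq_card_setU _ _).2.
  by apply/pred0P => a; rewrite /= inE noAc.
apply: leq_trans (subset_leq_card (below_shift_subset d)) _.
apply: leq_trans (leq_card_setU _ _).1 _.
apply: leq_trans (leq_add card_D (leqnn _)) _; rewrite -card_Ac.
by apply: subset_leq_card; rewrite finset.subUset c_sub A_L_subset_below_eta.
Qed.

End Control.

Lemma eta_in_H_L : H_L z m c L eta.
Proof.
rewrite /H_L /= sum_nat_boolE -[X in (_ <= X)%N]card_A_L; apply: subset_leq_card.
apply/fintype.subsetP => i; rewrite !inE /eta_L.
by case: (i \in A); rewrite ?ltxx ?andbF.
Qed.

End ShiftEta.

Lemma inf_attained (R : realType) (E : set R) x : E x -> lbound E x -> inf E = x.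
Proof.
move=> Ex Ex_lb; apply/le_anti/andP; split; last by apply: lb_le_inf; first exists x.
by apply: ge_inf Ex; exists x.
Qed.

Local Open Scope classical_set_scope.

Theorem lemma3 (R : realType) (n : nat) (phi : nat -> R)
  (z m : 'I_n -> bool) (y : 'I_n -> \bar R) (L : nat) (c kappa : R) :
  {homo phi : a b / (a <= b)%N >-> a <= b} ->
  (forall i, m i -> y i \is a fin_num) ->
  (forall i, ~~ m i -> (y i == +oo)%E || (y i == -oo)%E) ->
  (L <= #|N11 z m|)%N ->
  0 < kappa ->
  inf [set t_rank phi z (shift z m y d) | d in H_L z m c L]
    = t_rank phi z (shift z m y (eta_L z m y L c kappa))
  /\
  inf [set t_mw phi z (shift z m y d) | d in H_L z m c L]
    = t_mw phi z (shift z m y (eta_L z m y L c kappa)).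
Proof.
move=> phi_homo y_fin y_inf L_le kappa_gt0.
set eta := eta_L z m y L c kappa.
have eta_H : H_L z m c L eta by exact: eta_in_H_L.
have ctrl_eq d j : ~~ z j -> shift z m y d j = shift z m y eta j.
  by move=> zj; rewrite !shift_ctrl.
have below_le d : H_L z m c L d -> forall j, ~~ z j ->
    (nbelow (lexkey (shift z m y d)) z j <= nbelow (lexkey (shift z m y eta)) z j)%N.
  by move=> Hd j zj; apply: card_below_shift_le.
split; apply: inf_attained; try by exists eta.
- by move=> _ [d Hd <-]; apply: t_rank_le (ctrl_eq d) (below_le d Hd).
- by move=> _ [d Hd <-]; apply: t_mw_le (ctrl_eq d) (below_le d Hd).
Qed.
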